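(* Let $\mu>0$, $L>0$, let $g:\mathbb{R}^n\to\mathbb{R}$ be $\mu$-strongly convex and $(L+\mu)$-smooth, let $h$ be proper closed convex, $\psi=g+h$, and run the ACG method (see context) from $x_0\in\mathbb{R}^n$. Then for every $j\ge0$: (a) $\gamma_j\le\tilde\gamma_j\le\psi$, $\tilde\gamma_j(\tilde y_{j+1})=\gamma_j(\tilde y_{j+1})$, and $$\min_{u\in\mathbb{R}^n}\left\{\tilde\gamma_j(u)+\tfrac L2\|u-\tilde x_j\|^2\right\}=\min_{u\in\mathbb{R}^n}\left\{\gamma_j(u)+\tfrac L2\|u-\tilde x_j\|^2\right\},$$ with both minimization problems having $\tilde y_{j+1}$ as unique optimal solution; (b) $\gamma_j$ and $\Gamma_{j+1}$ are $\mu$-strongly convex quadratic functions; (c) $x_j=\mathrm{argmin}_{u\in\mathbb{R}^n}\{A_j\Gamma_j(u)+\|u-x_0\|^2/2\}$.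
   Context: $\ell_g(u;x)=g(x)+\langle\nabla g(x),u-x\rangle$. ACG method: $A_0=0$, $\tau_0=1/L$, $y_0=x_0$; for $j\ge0$: $a_j=\frac{\tau_j+\sqrt{\tau_j^2+4\tau_jA_j}}{2}$, $\tau_{j+1}=\tau_j+\mu a_j/L$, $A_{j+1}=A_j+a_j$, $\tilde x_j=\frac{A_j}{A_{j+1}}y_j+\frac{a_j}{A_{j+1}}x_j$; $\tilde y_{j+1}=\mathrm{argmin}_u\{\ell_g(u;\tilde x_j)+h(u)+\frac{L+\mu}{2}\|u-\tilde x_j\|^2\}$; $y_{j+1}\in\mathrm{Argmin}\{\psi(u):u\in\{y_j,\tilde y_{j+1}\}\}$; $x_{j+1}=\frac{(L+\mu)a_j\tilde y_{j+1}-\frac{A_ja_jL}{A_{j+1}}y_j}{A_{j+1}\mu+1}$. Define $\tilde\gamma_j(u)=\ell_g(u;\tilde x_j)+h(u)+\frac\mu2\|u-\tilde x_j\|^2$, $\gamma_j(u)=\tilde\gamma_j(\tilde y_{j+1})+L\langle\tilde x_j-\tilde y_{j+1},u-\tilde y_{j+1}\rangle+\frac\mu2\|u-\tilde y_{j+1}\|^2$, $\Gamma_0\equiv0$, $\Gamma_{j+1}=(A_j\Gamma_j+a_j\gamma_j)/A_{j+1}$. *)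

From HB Require Import structures.
From mathcomp Require Import all_boot all_order all_algebra.
From mathcomp Require Import all_classical all_reals all_analysis.
Set Implicit Arguments. Unset Strict Implicit. Unset Printing Implicit Defensive.
Import Order.TTheory GRing.Theory Num.Theory.
Import numFieldNormedType.Exports.
Local Open Scope ring_scope.

Section Defs.
Variables (R : realType) (n : nat).
Local Notation vec := 'rV[R]_n.

Definition dotv (u v : vec) : R := (u *m v^T) 0 0.
Definition sqn (u : vec) : R := dotv u u.
Definition enorm (u : vec) : R := Num.sqrt (sqn u).

Definition lin (g : vec -> R) (grad : vec -> vec) (x u : vec) : R :=
  (g x + dotv (grad x) (u - x)).

Definition is_gradient (g : vec -> R) (grad : vec -> vec) : Prop :=
  forall x, differentiable g x /\ forall v, 'd g x v = dotv (grad x) v.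

Definition strongly_convex (mu : R) (f : vec -> \bar R) : Prop :=
  forall (x y : vec) (t : R), (0 < t < 1) ->
    (f (t *: x + (1 - t) *: y)%R <=
      (t%:E * f x + (1 - t)%:E * f y) - (mu / 2 * t * (1 - t) * sqn (x - y))%:E)%E.

Definition convex_fun (f : vec -> \bar R) : Prop := strongly_convex 0 f.

Definition smooth_grad (L : R) (grad : vec -> vec) : Prop :=
  forall x y, (enorm (grad x - grad y) <= L * enorm (x - y)).

Definition proper_fun (f : vec -> \bar R) : Prop :=
  (forall x, f x != -oo%E) /\ (exists x, f x \is a fin_num).
Definition closed_fun (f : vec -> \bar R) : Prop := lower_semicontinuous f.

Definition quadratic (f : vec -> \bar R) : Prop :=
  exists (Q : 'M[R]_n) (b : vec) (c : R),
    forall u, f u = (c + dotv b u + 2^-1 * (u *m Q *m u^T) 0 0)%:E.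

Definition is_argmin (F : vec -> \bar R) (x : vec) : Prop := forall u, (F x <= F u)%E.
Definition unique_argmin (F : vec -> \bar R) (x : vec) : Prop :=
  is_argmin F x /\ forall u, is_argmin F u -> u = x.

Fixpoint ACG_Atau (mu L : R) (j : nat) : R * R :=
  match j with
  | 0 => (0, L^-1)
  | j.+1 => let (A, t) := ACG_Atau mu L j in
            let a := ((t + Num.sqrt (t ^+ 2 + 4 * t * A)) / 2) in
            ((A + a), (t + mu * a / L))
  end.
Definition ACG_A mu L j := (ACG_Atau mu L j).1.
Definition ACG_tau mu L j := (ACG_Atau mu L j).2.
Definition ACG_a mu L j : R :=
  ((ACG_tau mu L j + Num.sqrt (ACG_tau mu L j ^+ 2 + 4 * ACG_tau mu L j * ACG_A mu L j)) / 2).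

Definition ACG_run (mu L : R) (g : vec -> R) (grad : vec -> vec) (h : vec -> \bar R)
    (x0 : vec) (x y xt yt : nat -> vec) : Prop :=
  let A := ACG_A mu L in let a := ACG_a mu L in
  let psi := fun u => ((g u)%:E + h u)%E in
  x 0%N = x0 /\ y 0%N = x0 /\
  forall j : nat,
    xt j = (A j / A j.+1) *: y j + (a j / A j.+1) *: x j /\
    is_argmin (fun u => (lin g grad (xt j) u)%:E + h u
                        + ((L + mu) / 2 * sqn (u - xt j))%:E)%E (yt j.+1) /\
    (y j.+1 = y j \/ y j.+1 = yt j.+1) /\
    (psi (y j.+1) <= psi (y j))%E /\ (psi (y j.+1) <= psi (yt j.+1))%E /\
    x j.+1 = ((A j.+1 * mu + 1)^-1) *:
               ((L + mu) * a j *: yt j.+1 - (A j * a j * L / A j.+1) *: y j).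

Definition ACG_gammat (mu : R) g grad (h : vec -> \bar R) (xt : nat -> vec) j u :=
  ((lin g grad (xt j) u)%:E + h u + (mu / 2 * sqn (u - xt j))%:E)%E.
Definition ACG_gamma (mu L : R) g grad h (xt yt : nat -> vec) j u :=
  (ACG_gammat mu g grad h xt j (yt j.+1)
  + (L * dotv (xt j - yt j.+1) (u - yt j.+1) + mu / 2 * sqn (u - yt j.+1))%:E)%E.
Fixpoint ACG_Gamma (mu L : R) g grad h (xt yt : nat -> vec) j u : \bar R :=
  match j with
  | 0 => 0%E
  | j.+1 => (((ACG_A mu L j.+1)^-1)%:E *
              ((ACG_A mu L j)%:E * ACG_Gamma mu L g grad h xt yt j u
               + (ACG_a mu L j)%:E * ACG_gamma mu L g grad h xt yt j u))%E
  end.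

End Defs.

From HB Require Import structures.
From mathcomp Require Import all_boot all_order all_algebra.
From mathcomp Require Import all_classical all_reals all_analysis.
From mathcomp Require Import ring lra.
Set Implicit Arguments. Unset Strict Implicit. Unset Printing Implicit Defensive.
Import Order.TTheory GRing.Theory Num.Theory.
Import numFieldNormedType.Exports.
Local Open Scope classical_set_scope.
Local Open Scope ring_scope.

(* The proximal step makes yt_{j+1} the minimizer of gammat_j + L/2 |. - xt_j|^2,
   which is (L + mu)-strongly convex, so this function exceeds its minimum by at least
   (L + mu)/2 |. - yt_{j+1}|^2.  That bound is exactly gamma_j + L/2 |. - xt_j|^2, which gives
   (a); gammat_j <= psi is the gradient inequality of the mu-strongly convex g.  Each gamma_j
   has the form c + <b, u> + mu/2 |u|^2, hence so does A_j Gamma_j with mu replaced by A_j mu.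
   Tracking its linear part b_j through the recursion, the identity a_j^2 L = A_{j+1} (1 + A_j mu)
   shows x_j = (x_0 - b_j) / (1 + A_j mu), the minimizer of A_j Gamma_j + |. - x_0|^2 / 2. *)

Section InnerProduct.
Context {R : realType} {n : nat}.
Implicit Types (u v w : 'rV[R]_n) (a : R).

Lemma dotvC u v : dotv u v = dotv v u.
Proof. by rewrite /dotv -[in RHS](trmxK v) -trmx_mul [RHS]mxE. Qed.
Lemma dotvDl u v w : dotv (u + w) v = dotv u v + dotv w v.
Proof. by rewrite /dotv mulmxDl mxE. Qed.
Lemma dotvZl a u v : dotv (a *: u) v = a * dotv u v.
Proof. by rewrite /dotv -scalemxAl mxE. Qed.
Lemma dotvNl u v : dotv (- u) v = - dotv u v.
Proof. by rewrite -scaleN1r dotvZl mulN1r. Qed.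
Lemma dotvBl u v w : dotv (u - w) v = dotv u v - dotv w v.
Proof. by rewrite dotvDl dotvNl. Qed.
Lemma dotvDr u v w : dotv v (u + w) = dotv v u + dotv v w.
Proof. by rewrite dotvC dotvDl !(dotvC v). Qed.
Lemma dotvZr a u v : dotv v (a *: u) = a * dotv v u.
Proof. by rewrite dotvC dotvZl dotvC. Qed.
Lemma dotvNr u v : dotv v (- u) = - dotv v u.
Proof. by rewrite dotvC dotvNl dotvC. Qed.
Lemma dotvBr u v w : dotv v (u - w) = dotv v u - dotv v w.
Proof. by rewrite dotvDr dotvNr. Qed.
Lemma dotv0r u : dotv u 0 = 0.
Proof. by rewrite /dotv trmx0 mulmx0 mxE. Qed.

Lemma sqnE u : sqn u = \sum_i u 0 i ^+ 2.
Proof. by rewrite /sqn /dotv mxE; apply: eq_bigr => i _; rewrite mxE expr2. Qed.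
Lemma sqn_ge0 u : 0 <= sqn u.
Proof. by rewrite sqnE sumr_ge0 // => i _; rewrite sqr_ge0. Qed.
Lemma sqn0 : sqn (0 : 'rV[R]_n) = 0.
Proof. by rewrite /sqn dotv0r. Qed.
Lemma sqn_eq0 u : (sqn u == 0) = (u == 0).
Proof.
apply/idP/eqP => [|->]; last by rewrite sqn0.
rewrite sqnE psumr_eq0 => [/allP u0|i _]; last by rewrite sqr_ge0.
apply/rowP => i; have /implyP := u0 i (mem_index_enum i).
by rewrite sqrf_eq0 mxE => /(_ isT)/eqP.
Qed.
End InnerProduct.

Ltac dotv_expand :=
  rewrite /sqn ?(dotvDl, dotvDr, dotvBl, dotvBr, dotvZl, dotvZr, dotvNl, dotvNr).

Section AffineBound.
Variable R : realType.

Lemma cvg_le_affine (q : R -> R) (l c K : R) :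
  q t @[t --> 0^'] --> l -> (forall t, 0 < t < 1 -> q t <= c + t * K) -> l <= c.
Proof.
move=> ql qle.
have affc : c + t * K @[t --> 0^'+] --> c.
  have : c + t * K @[t --> (0 : R)] --> c + 0 * K.
    apply: cvgD; first exact: cvg_cst.
    by apply: cvgMl; exact: cvg_id.
  by rewrite mul0r addr0 => /cvg_at_right_filter.
apply: (ler_cvg_to (cvg_dnbhs_at_right ql) affc).
by near=> t; apply: qle; apply/andP; split; near: t; [exact: nbhs_right_gt | exact: nbhs_right_lt].
Unshelve. all: by end_near.
Qed.

Lemma le_affine (a b K : R) : (forall t, 0 < t < 1 -> a <= b + t * K) -> a <= b.
Proof. by apply: (cvg_le_affine (q := fun=> a)); exact: cvg_cst. Qed.
End AffineBound.

Section Convexity.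
Context {R : realType} {n : nat}.
Local Notation vec := 'rV[R]_n.

Lemma strongly_convex_lin_le (mu : R) (g : vec -> R) (grad : vec -> vec) :
  is_gradient g grad -> strongly_convex mu (fun u => (g u)%:E) ->
  forall x u, lin g grad x u + mu / 2 * sqn (u - x) <= g u.
Proof.
move=> gradg gsc x u; set v := u - x.
have [dg dgv] := gradg x.
have quot : (fun t => t^-1 *: ((g \o shift x) (t *: v) - g x)) @ 0^' --> dotv (grad x) v.
  by rewrite -dgv -deriveE //; exact: diff_derivable.
suff : dotv (grad x) v <= g u - g x - mu / 2 * sqn v by rewrite /lin; lra.
apply: (cvg_le_affine (K := mu / 2 * sqn v) quot) => t /andP [t0 t1].
have := gsc u x t; rewrite t0 t1 -!EFinM -EFinD lee_fin => /(_ isT).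
have -> : t *: u + (1 - t) *: x = t *: v + x by apply/rowP => i; rewrite !mxE; ring.
rewrite /= -[t^-1 *: _]/(t^-1 * _) ler_pdivrMl //.
nra.
Qed.

Lemma quadratic_strongly_convex (f : vec -> \bar R) (c m : R) (b : vec) :
  (forall u, f u = (c + dotv b u + m / 2 * sqn u)%:E) ->
  quadratic f /\ strongly_convex m f.
Proof.
move=> fE; split.
  exists m%:M, b, c => u; rewrite fE mul_mx_scalar -scalemxAl mxE.
  by congr (_%:E); rewrite -[(u *m u^T) 0 0]/(sqn u); ring.
move=> x y t _; rewrite !fE -!EFinM -EFinD lee_fin.
dotv_expand; rewrite (dotvC y x).
lra.
Qed.

Lemma strongly_convex_EFinD (m : R) (q : vec -> R) (h : vec -> \bar R) :
  (forall x, h x != -oo%E) -> convex_fun h ->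
  strongly_convex m (fun u => (q u)%:E) ->
  strongly_convex m (fun u => ((q u)%:E + h u)%E).
Proof.
move=> hN hconv qsc x y t t01; have /andP [t0 t1] := t01.
have qz := qsc x y t t01; rewrite -!EFinM -EFinD lee_fin in qz.
have t'0 : (0 < (1 - t)%:E)%E by rewrite lte_fin subr_gt0.
move: (hN x) (hN y) (hconv x y t t01) (hN (t *: x + (1 - t) *: y)).
case: (h x) => [r| |] // _; case: (h y) => [s| |] // _;
  try by move=> _ _; rewrite !gt0_muley ?lte_fin //; exact: leey.
rewrite mul0r !mul0r sube0 -!EFinM -EFinD.
case: (h _) => [w| |] // + _; rewrite -!EFinD !lee_fin.
lra.
Qed.

Lemma strongly_convex_argmin_growth (m : R) (F : vec -> \bar R) (y : vec) (c : R) :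
  strongly_convex m F -> is_argmin F y -> F y = c%:E ->
  forall u, ((c + m / 2 * sqn (u - y))%:E <= F u)%E.
Proof.
move=> Fsc ymin Fy u; case Fu: (F u) => [r| |]; last 2 first.
- exact: leey.
- by have := ymin u; rewrite Fy Fu.
rewrite lee_fin; apply: (le_affine (K := m / 2 * sqn (u - y))) => t /andP [t0 t1].
have := Fsc u y t; rewrite t0 t1 Fu Fy -!EFinM -!EFinD => /(_ isT) Fz.
have := le_trans (ymin _) Fz; rewrite Fy lee_fin => cle.
rewrite -(ler_pM2l t0); nra.
Qed.

Lemma unique_argmin_of_growth (F : vec -> \bar R) (y : vec) (c K : R) :
  0 < K -> F y = c%:E -> (forall u, ((c + K * sqn (u - y))%:E <= F u)%E) ->
  unique_argmin F y.
Proof.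
move=> K0 Fy Fge; split=> [u|u umin].
  by rewrite Fy (le_trans _ (Fge u)) // lee_fin lerDl mulr_ge0 ?sqn_ge0 ?ltW.
have := le_trans (Fge u) (umin y); rewrite Fy lee_fin gerDl pmulr_rle0 // => s0.
by apply/eqP; rewrite -subr_eq0 -sqn_eq0 eq_le s0 sqn_ge0.
Qed.

Lemma quadratic_unique_argmin (F : vec -> \bar R) (c m : R) (b : vec) :
  0 < m -> (forall u, F u = (c + dotv b u + m / 2 * sqn u)%:E) ->
  unique_argmin F (- m^-1 *: b).
Proof.
move=> m0 FE; apply: (unique_argmin_of_growth (K := m / 2)) => [||u].
- exact: divr_gt0.
- by rewrite FE.
rewrite !FE lee_fin; dotv_expand; rewrite (dotvC u b).
rewrite [X in X <= _](_ : _ = c + dotv b u + m / 2 * dotv u u) //.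
by field; rewrite gt_eqF.
Qed.
End Convexity.

Section ACGScalars.
Variables (R : realType) (mu L : R).
Hypotheses (mu_ge0 : 0 <= mu) (L_gt0 : 0 < L).
Local Notation A := (ACG_A mu L).
Local Notation a := (ACG_a mu L).
Local Notation tau := (ACG_tau mu L).

Lemma ACG_AS j : A j.+1 = A j + a j.
Proof. by rewrite /ACG_a /ACG_A /ACG_tau /=; case: (ACG_Atau mu L j). Qed.

Lemma ACG_tauS j : tau j.+1 = tau j + mu * a j / L.
Proof. by rewrite /ACG_a /ACG_A /ACG_tau /=; case: (ACG_Atau mu L j). Qed.

Lemma ACG_a_ge_tau j : tau j / 2 <= a j.
Proof. by rewrite /ACG_a ler_pM2r // lerDl sqrtr_ge0. Qed.

Lemma ACG_tau_gt0 j : 0 < tau j.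
Proof.
elim: j => [|j tau_gt0]; first by rewrite /ACG_tau invr_gt0.
have a_ge0 : 0 <= a j by apply: le_trans (ACG_a_ge_tau j); rewrite divr_ge0 ?ltW.
rewrite ACG_tauS; apply: (lt_le_trans tau_gt0).
by rewrite lerDl; apply: divr_ge0; [exact: mulr_ge0 | exact: ltW].
Qed.

Lemma ACG_a_gt0 j : 0 < a j.
Proof. by apply: lt_le_trans (ACG_a_ge_tau j); rewrite divr_gt0 ?ACG_tau_gt0. Qed.

Lemma ACG_A_ge0 j : 0 <= A j.
Proof.
by elim: j => // j A_ge0; rewrite ACG_AS; exact: addr_ge0 A_ge0 (ltW (ACG_a_gt0 j)).
Qed.

Lemma ACG_A_gt0 j : 0 < A j.+1.
Proof. by rewrite ACG_AS ltr_wpDl ?ACG_A_ge0 ?ACG_a_gt0. Qed.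

Lemma ACG_L_tau j : L * tau j = 1 + mu * A j.
Proof.
elim: j => [|j IH]; first by rewrite /ACG_tau /ACG_A /= mulfV ?gt_eqF // mulr0 addr0.
by rewrite ACG_tauS ACG_AS mulrDr IH; field; rewrite gt_eqF.
Qed.

(* a_j is the positive root of a^2 = tau_j (A_j + a). *)
Lemma ACG_a_sqr j : a j ^+ 2 = tau j * A j.+1.
Proof.
have disc_ge0 : 0 <= tau j ^+ 2 + 4 * tau j * A j.
  by rewrite addr_ge0 ?sqr_ge0 // !mulr_ge0 ?ACG_A_ge0 ?ltW ?ACG_tau_gt0.
have := sqr_sqrtr disc_ge0; rewrite ACG_AS /ACG_a.
set s := Num.sqrt _; move: (tau j) (A j) => t A0 sE.
apply/eqP; rewrite -subr_eq0; apply/eqP.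
transitivity ((s ^+ 2 - (t ^+ 2 + 4 * t * A0)) / 4); first by field.
by rewrite sE subrr mul0r.
Qed.

Lemma ACG_a_sqr_L j : a j ^+ 2 * L = A j.+1 * (1 + A j * mu).
Proof. by rewrite ACG_a_sqr mulrAC (mulrC _ L) ACG_L_tau mulrC (mulrC mu). Qed.
End ACGScalars.

Section ProxStep.
Variables (R : realType) (n : nat) (mu L : R) (g : 'rV[R]_n -> R)
  (grad : 'rV[R]_n -> 'rV[R]_n) (h : 'rV[R]_n -> \bar R) (xt yt : nat -> 'rV[R]_n) (j : nat).
Hypotheses (mu_ge0 : 0 <= mu) (L_gt0 : 0 < L).
Hypotheses (h_proper : proper_fun h) (h_convex : convex_fun h).
Hypotheses (gradg : is_gradient g grad) (g_sconvex : strongly_convex mu (fun u => (g u)%:E)).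
Local Notation xb := (xt j).
Local Notation yb := (yt j.+1).
Local Notation gammat := (ACG_gammat mu g grad h xt j).
Local Notation gamma := (ACG_gamma mu L g grad h xt yt j).

Let prox u := ((lin g grad xb u + (L + mu) / 2 * sqn (u - xb))%:E + h u)%E.

Hypothesis yb_min : is_argmin (fun u => (lin g grad xb u)%:E + h u
                                  + ((L + mu) / 2 * sqn (u - xb))%:E)%E yb.

Lemma proxE u :
  prox u = ((lin g grad xb u)%:E + h u + ((L + mu) / 2 * sqn (u - xb))%:E)%E.
Proof. by rewrite /prox EFinD addeAC. Qed.

Lemma prox_argmin : is_argmin prox yb.
Proof. by move=> u; rewrite !proxE. Qed.

Lemma prox_fin_num : h yb \is a fin_num.
Proof.
have [hN [u hu]] := h_proper; have := yb_min u; rewrite -(fineK hu).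
by case: (h yb) (hN yb).
Qed.

Let hy := fine (h yb).
Let prox_min := lin g grad xb yb + hy + (L + mu) / 2 * sqn (yb - xb).

Lemma prox_yb : prox yb = prox_min%:E.
Proof. by rewrite /prox /prox_min -(fineK prox_fin_num) -!EFinD addrAC. Qed.

Lemma prox_growth u : ((prox_min + (L + mu) / 2 * sqn (u - yb))%:E <= prox u)%E.
Proof.
apply: (strongly_convex_argmin_growth _ prox_argmin prox_yb).
apply: strongly_convex_EFinD => //; first by case: h_proper.
pose b := grad xb - (L + mu) *: xb.
pose c := g xb - dotv (grad xb) xb + (L + mu) / 2 * sqn xb.
apply: (quadratic_strongly_convex (c := c) (b := b) _).2 => u'.
rewrite /lin /b /c; congr (_%:E); dotv_expand; rewrite (dotvC u' xb).
lra.
Qed.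

Lemma ACG_gammat_prox u : (gammat u + (L / 2 * sqn (u - xb))%:E)%E = prox u.
Proof. by rewrite /ACG_gammat /prox -addeA -EFinD addeAC -EFinD; congr (_%:E + _)%E; ring. Qed.

Let gammat_yb := lin g grad xb yb + hy + mu / 2 * sqn (yb - xb).

Lemma ACG_gammaE u :
  gamma u = (gammat_yb + L * dotv (xb - yb) (u - yb) + mu / 2 * sqn (u - yb))%:E.
Proof.
by rewrite /ACG_gamma /ACG_gammat -(fineK prox_fin_num) -!EFinD addrA.
Qed.

(* The term L <xb - yb, u - yb> of gamma_j completes L/2 |u - xb|^2 to a square centred at yb. *)
Lemma ACG_gamma_prox u :
  (gamma u + (L / 2 * sqn (u - xb))%:E)%E = (prox_min + (L + mu) / 2 * sqn (u - yb))%:E.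
Proof.
rewrite ACG_gammaE -EFinD /prox_min /gammat_yb; congr (_%:E).
have -> : u - xb = (u - yb) + (yb - xb) by rewrite addrA subrK.
rewrite -(opprB yb xb); move: (u - yb) (yb - xb) => w d.
dotv_expand; rewrite (dotvC d w); lra.
Qed.

Lemma ACG_gamma_quadratic_form : exists c, forall u,
  gamma u = (c + dotv (L *: (xb - yb) - mu *: yb) u + mu / 2 * sqn u)%:E.
Proof.
exists (gammat_yb - L * dotv (xb - yb) yb + mu / 2 * sqn yb) => u.
rewrite ACG_gammaE; congr (_%:E); move: (xb - yb) => d.
dotv_expand; rewrite (dotvC yb u) (dotvC d u); lra.
Qed.

Lemma ACG_prox_step :
  (forall u, (gamma u <= gammat u)%E) /\
  (forall u, (gammat u <= (g u)%:E + h u)%E) /\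
  gammat yb = gamma yb /\
  let F1 := fun u => (gammat u + (L / 2 * sqn (u - xb))%:E)%E in
  let F2 := fun u => (gamma u + (L / 2 * sqn (u - xb))%:E)%E in
  unique_argmin F1 yb /\ unique_argmin F2 yb /\ F1 yb = F2 yb.
Proof.
have K_gt0 : 0 < (L + mu) / 2 by rewrite divr_gt0 // ltr_wpDr.
have F2yb : (gamma yb + (L / 2 * sqn (yb - xb))%:E)%E = prox_min%:E.
  by rewrite ACG_gamma_prox subrr sqn0 mulr0 addr0.
split=> [u|].
  rewrite -(@leeD2rE _ (L / 2 * sqn (u - xb))%:E) //.
  by rewrite ACG_gammat_prox ACG_gamma_prox prox_growth.
split=> [u|].
  rewrite /ACG_gammat -addeA (addeC (h u)) addeA -EFinD leeD2r // lee_fin.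
  have := strongly_convex_lin_le gradg g_sconvex xb u; lra.
split; first by rewrite /ACG_gamma subrr dotv0r sqn0 !mulr0 addr0 adde0.
split.
  apply: (unique_argmin_of_growth K_gt0); first by rewrite /= ACG_gammat_prox prox_yb.
  by move=> u; rewrite ACG_gammat_prox prox_growth.
split; first by apply: (unique_argmin_of_growth K_gt0 F2yb) => u; rewrite ACG_gamma_prox.
by rewrite /= F2yb ACG_gammat_prox prox_yb.
Qed.
End ProxStep.

Section ACGRun.
Variables (R : realType) (n : nat) (mu L : R) (g : 'rV[R]_n -> R)
  (grad : 'rV[R]_n -> 'rV[R]_n) (h : 'rV[R]_n -> \bar R)
  (x0 : 'rV[R]_n) (x y xt yt : nat -> 'rV[R]_n).
Hypotheses (mu_ge0 : 0 <= mu) (L_gt0 : 0 < L) (h_proper : proper_fun h).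
Hypothesis run : ACG_run mu L g grad h x0 x y xt yt.
Local Notation A := (ACG_A mu L).
Local Notation a := (ACG_a mu L).
Local Notation Gamma := (ACG_Gamma mu L g grad h xt yt).

Lemma ACG_Gamma_form j : exists c b,
  (forall u, ((A j)%:E * Gamma j u)%E = (c + dotv b u + A j * mu / 2 * sqn u)%:E) /\
  x j = (1 + A j * mu)^-1 *: (x0 - b).
Proof.
have [x_0 [_ step]] := run.
elim: j => [|j [c [b [GammaE xE]]]].
  exists 0, 0; split=> [u|]; first by rewrite mul0e dotvC dotv0r !mul0r !addr0.
  by rewrite x_0 /ACG_A /= mul0r addr0 invr1 scale1r subr0.
have [c' gammaE] := ACG_gamma_quadratic_form h_proper (step j).2.1.
have A'_neq0 : A j.+1 != 0 by rewrite gt_eqF // ACG_A_gt0.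
have s_gt0 : 0 < 1 + A j * mu by rewrite ltr_pwDl // mulr_ge0 // ACG_A_ge0.
exists (c + a j * c'), (b + a j *: (L *: (xt j - yt j.+1) - mu *: yt j.+1)); split.
  move=> u; rewrite /= muleA -EFinM mulfV // mul1e GammaE gammaE -EFinM -EFinD.
  by congr (_%:E); rewrite dotvDl dotvZl ACG_AS; ring.
have [xtE [_ [_ [_ [_ xE']]]]] := step j.
have x0b : x0 - b = (1 + A j * mu) *: x j by rewrite xE scalerA mulfV ?gt_eqF // scale1r.
have sE : 1 + A j * mu = a j ^+ 2 * L / A j.+1 by rewrite ACG_a_sqr_L // mulrAC mulfV // mul1r.
rewrite xE' (addrC (_ * mu)) opprD addrA x0b xtE sE.
by congr (_ *: _); apply/rowP => i; rewrite !mxE; field.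
Qed.

Lemma ACG_Gamma_quadratic_form j : exists c b, forall u,
  Gamma j.+1 u = (c + dotv b u + mu / 2 * sqn u)%:E.
Proof.
have [c [b [GammaE _]]] := ACG_Gamma_form j.+1.
have A_neq0 : A j.+1 != 0 by rewrite gt_eqF // ACG_A_gt0.
exists ((A j.+1)^-1 * c), ((A j.+1)^-1 *: b) => u.
rewrite -[Gamma _ _]mul1e -(mulVf A_neq0) EFinM -muleA GammaE -EFinM dotvZl.
by congr (_%:E); field.
Qed.

Lemma ACG_x_argmin j :
  unique_argmin (fun u => ((A j)%:E * Gamma j u + (sqn (u - x0) / 2)%:E)%E) (x j).
Proof.
have [c [b [GammaE xE]]] := ACG_Gamma_form j.
have s_gt0 : 0 < 1 + A j * mu by rewrite ltr_pwDl // mulr_ge0 // ACG_A_ge0.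
rewrite xE -opprB scalerN -scaleNr.
apply: (quadratic_unique_argmin (c := c + sqn x0 / 2)) => // u.
rewrite GammaE -EFinD; congr (_%:E); dotv_expand; rewrite (dotvC u x0); lra.
Qed.
End ACGRun.

Local Open Scope ereal_scope.

Theorem lemma2p2 (R : realType) (n : nat) (mu L : R)
  (g : 'rV[R]_n -> R) (grad : 'rV[R]_n -> 'rV[R]_n) (h : 'rV[R]_n -> \bar R)
  (x0 : 'rV[R]_n) (x y xt yt : nat -> 'rV[R]_n) :
  (0 < mu)%R -> (0 < L)%R ->
  is_gradient g grad ->
  strongly_convex mu (fun u => (g u)%:E) ->
  smooth_grad (L + mu) grad ->
  proper_fun h -> closed_fun h -> convex_fun h ->
  ACG_run mu L g grad h x0 x y xt yt ->
  let psi := fun u => (g u)%:E + h u in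
  let gammat := ACG_gammat mu g grad h xt in
  let gamma := ACG_gamma mu L g grad h xt yt in
  let Gamma := ACG_Gamma mu L g grad h xt yt in
  forall j : nat,
    (* (a) *)
    ((forall u, gamma j u <= gammat j u) /\ (forall u, gammat j u <= psi u) /\
     gammat j (yt j.+1) = gamma j (yt j.+1) /\
     let F1 := fun u => gammat j u + (L / 2 * sqn (u - xt j))%:E in
     let F2 := fun u => gamma j u + (L / 2 * sqn (u - xt j))%:E in
     unique_argmin F1 (yt j.+1) /\ unique_argmin F2 (yt j.+1) /\
     F1 (yt j.+1) = F2 (yt j.+1)) /\
    (* (b) *)
    (quadratic (gamma j) /\ strongly_convex mu (gamma j) /\
     quadratic (Gamma j.+1) /\ strongly_convex mu (Gamma j.+1)) /\
    (* (c) *)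
    unique_argmin (fun u => (ACG_A mu L j)%:E * Gamma j u + (sqn (u - x0) / 2)%:E) (x j).
Proof.
(* Smoothness of g and closedness of h only serve to make the iterates exist, which
   ACG_run already provides. *)
move=> /ltW mu_ge0 L_gt0 gradg g_sconvex _ h_proper _ h_convex run psi gammat gamma Gamma j.
have [_ [_ /(_ j) [_ [yt_min _]]]] := run.
split; first exact: (ACG_prox_step mu_ge0 L_gt0 h_proper h_convex gradg g_sconvex yt_min).
split; last exact: (ACG_x_argmin mu_ge0 L_gt0 h_proper run).
have [c gammaE] := ACG_gamma_quadratic_form h_proper yt_min.
have [c' [b' GammaE]] := ACG_Gamma_quadratic_form mu_ge0 L_gt0 h_proper run j.
have [gamma_quad gamma_sconvex] := quadratic_strongly_convex gammaE.
have [Gamma_quad Gamma_sconvex] := quadratic_strongly_convex GammaE.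
by do !split.
Qed.
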